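(* Let $G$ be a connected graph and $\sigma$ a BFS ordering of $G$. If the $\mathcal{F}$-tree $T$ of $\sigma$ has at most $k$ leaves, then the bandwidth of $\sigma$ is at most $k$.
   Context: All graphs are finite, simple, undirected, connected and non-empty. A BFS ordering is an ordering of $V(G)$ produced by breadth-first search: pick a start vertex, mark it visited and put it in a queue; repeatedly remove the front vertex $v$ of the queue and append all not yet visited neighbors of $v$ (in some order) to the queue, marking them visited; the ordering is the order in which vertices are visited. The $\mathcal{F}$-tree of an ordering $\sigma=(v_1,\dots,v_n)$ (where each $v_i$, $i>1$, has an earlier neighbor) is the spanning tree rooted at $v_1$ in which the parent of each $v_i$, $i>1$, is its neighbor appearing leftmost in $\sigma$. A leaf is a non-root vertex of the tree without children (the root is never a leaf). The bandwidth of $\sigma=(v_1,\dots,v_n)$ is $\max_{v_iv_j\in E(G)}|i-j|$. *)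

From mathcomp Require Import all_boot all_order.
Set Implicit Arguments. Unset Strict Implicit. Unset Printing Implicit Defensive.

Section Graphs.
Variable T : finType.

Definition simple_graph (e : rel T) : Prop :=
  symmetric e /\ irreflexive e.

Definition connected_graph (e : rel T) : Prop :=
  forall x y : T, connect e x y.

(* Execution of BFS.  [bfs_run e ord q fin]: with current visiting order
   [ord] (list of visited vertices, in order of visiting) and queue [q],
   the search terminates with final ordering [fin]. *)
Inductive bfs_run (e : rel T) : seq T -> seq T -> seq T -> Prop :=
| bfs_done ord : bfs_run e ord [::] ord
| bfs_step ord v q new fin :
    perm_eq new [seq x <- enum T | e v x & x \notin ord] ->
    bfs_run e (ord ++ new) (q ++ new) fin ->
    bfs_run e ord (v :: q) fin.

Definition bfs_ordering (e : rel T) (s : seq T) : Prop :=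
  exists r : T, bfs_run e [:: r] [:: r] s.

(* F-tree of an ordering s: rooted at the first vertex of s; the parent
   of a non-root vertex v is its neighbor appearing leftmost in s. *)
Definition ftree_root (s : seq T) (v0 : T) : T := head v0 s.

Definition ftree_parent (e : rel T) (s : seq T) (v : T) : T :=
  nth v s (find (e v) s).

Definition ftree_leaves (e : rel T) (s : seq T) : {set T} :=
  [set v in s | (v != head v s) &&
     ~~ [exists u in s, (u != head u s) && (ftree_parent e s u == v)]].

Definition bandwidth (e : rel T) (s : seq T) : nat :=
  \max_(p : T * T | e p.1 p.2)
     maxn (index p.1 s - index p.2 s) (index p.2 s - index p.1 s).

End Graphs.

(* In a BFS ordering the F-tree parent of a non-root vertex comes before it,
   and the position of the parent is nondecreasing along the ordering.
   Let ab be an edge, with a at position i and b at position j > i.  Every vertex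
   at a position in (i, j] has its parent no later than the parent of b, hence
   at or before a.  Thus no such vertex is an ancestor of another, so the
   j - i vertices in the window have pairwise distinct leaf descendants (take
   a deepest one), and j - i is at most the number of leaves. *)

From mathcomp Require Import all_boot all_order.
From mathcomp Require Import zify.
Set Implicit Arguments. Unset Strict Implicit. Unset Printing Implicit Defensive.

Section ParentOrderings.
Variables (T : finType) (e : rel T).

(* [find (e x) s] is the position in [s] of the F-tree parent of [x]. *)
Definition parents_precede (s : seq T) : Prop :=
  {in s, forall x, 0 < index x s -> find (e x) s < index x s}.

Definition parents_monotone (s : seq T) : Prop :=
  {in s &, forall x y, 0 < index x s -> index x s <= index y s ->
     find (e x) s <= find (e y) s}.

(* [P] is the prefix of [ord] whose vertices have left the queue [q]. *)
Definition bfs_invariant (ord q : seq T) : Prop :=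
  exists2 P, ord = P ++ q &
    [/\ uniq ord, {in P, forall x y, e x y -> y \in ord},
        parents_precede ord, parents_monotone ord
      & {in q, forall x, 0 < index x ord -> find (e x) ord < size P}].

Lemma bfs_invariant_init r : bfs_invariant [:: r] [:: r].
Proof.
by exists [::]; split=> // [x|x y|x]; rewrite inE => /eqP-> //= /[!eqxx].
Qed.

End ParentOrderings.

Section BfsStep.
Variables (T : finType) (e : rel T) (ord P q new : seq T) (v : T).
Hypothesis e_sym : symmetric e.
Hypothesis ord_def : ord = P ++ v :: q.
Hypothesis new_def : perm_eq new [seq x <- enum T | e v x & x \notin ord].
Hypothesis ord_uniq : uniq ord.
Hypothesis P_closed : {in P, forall x y, e x y -> y \in ord}.
Hypothesis ord_precede : parents_precede e ord.
Hypothesis ord_monotone : parents_monotone e ord.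
Hypothesis queue_parents :
  {in v :: q, forall x, 0 < index x ord -> find (e x) ord < size P}.

Lemma mem_new x : (x \in new) = e v x && (x \notin ord).
Proof. by rewrite (perm_mem new_def) mem_filter mem_enum andbT. Qed.

Lemma uniq_ord_new : uniq (ord ++ new).
Proof.
rewrite cat_uniq ord_uniq (perm_uniq new_def) filter_uniq ?enum_uniq //=.
by rewrite andbT; apply/hasPn => x; rewrite mem_new => /andP[].
Qed.

Lemma find_new x : x \in new -> find (e x) (ord ++ new) = size P.
Proof.
rewrite mem_new => /andP[evx x_new].
have exv : e x v by rewrite e_sym.
have P_x : ~~ has (e x) P.
  apply/hasPn => p /P_closed p_closed; apply: contra x_new => exp.
  by apply: p_closed; rewrite e_sym.
have ord_x : has (e x) ord.
  by apply/hasP; exists v; rewrite // ord_def mem_cat inE eqxx orbT.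
by rewrite find_cat ord_x ord_def find_cat (negbTE P_x) /= exv addn0.
Qed.

Lemma find_old x : x \in ord -> 0 < index x ord ->
  find (e x) (ord ++ new) = find (e x) ord.
Proof.
move=> x_ord x_nonroot; rewrite find_cat has_find.
by rewrite (ltn_trans (ord_precede x_ord x_nonroot)) ?index_mem.
Qed.

Lemma find_old_le x : x \in ord -> 0 < index x ord -> find (e x) ord <= size P.
Proof.
move=> x_ord x_nonroot; move: (x_ord); rewrite {1}ord_def mem_cat => /orP[x_P|x_q].
  have := ord_precede x_ord x_nonroot.
  have : index x ord < size P by rewrite {1}ord_def index_cat x_P index_mem.
  lia.
exact/ltnW/queue_parents.
Qed.

Lemma bfs_invariant_step : bfs_invariant e (ord ++ new) (q ++ new).
Proof.
have index_new x : x \in new -> size ord <= index x (ord ++ new).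
  by move=> /[!mem_new] /andP[_ /negbTE x_ord]; rewrite index_cat x_ord leq_addr.
have index_old x : x \in ord -> index x (ord ++ new) = index x ord.
  by move=> x_ord; rewrite index_cat x_ord.
have size_P : size P < size ord by rewrite ord_def size_cat /=; lia.
exists (rcons P v); first by rewrite ord_def cat_rcons -catA.
split=> [||x|x y|x].
- exact: uniq_ord_new.
- move=> x; rewrite mem_rcons inE => /orP[/eqP-> y evy | /P_closed x_closed y /x_closed].
    by rewrite mem_cat mem_new evy; case: (y \in ord).
  by rewrite mem_cat => ->.
- rewrite mem_cat => /orP[x_ord|x_new].
    by rewrite index_old // => x_nonroot; rewrite find_old //; apply: ord_precede.
  by rewrite find_new // => _; have := index_new x x_new; lia.
- rewrite !mem_cat => /orP[x_ord|x_new] /orP[y_ord|y_new].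
  + rewrite !index_old // => x_nonroot xy.
    by rewrite !find_old //; [apply: ord_monotone | lia].
  + rewrite index_old // (find_new y_new) => x_nonroot _.
    by rewrite find_old // find_old_le.
  + have : index y ord < size ord by rewrite index_mem.
    by rewrite (index_old y y_ord); have := index_new x x_new; lia.
  + by rewrite !find_new.
- rewrite mem_cat size_rcons => /orP[x_q|x_new]; last by rewrite find_new.
  have x_ord : x \in ord by rewrite ord_def mem_cat inE x_q !orbT.
  rewrite index_old // => x_nonroot; rewrite find_old //.
  by have := queue_parents (mem_behead (s := v :: q) x_q) x_nonroot; lia.
Qed.

End BfsStep.

Section BfsOrderings.
Variables (T : finType) (e : rel T).
Hypothesis e_sym : symmetric e.

Lemma bfs_run_invariant ord q fin :
  bfs_run e ord q fin -> bfs_invariant e ord q -> bfs_invariant e fin [::].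
Proof.
elim=> // {}ord v {}q new {}fin new_def _ IH [P ord_def [? ? ? ? ?]].
by apply: IH; apply: bfs_invariant_step ord_def _ _ _ _ _ _.
Qed.

Lemma bfs_run_extends ord q fin : bfs_run e ord q fin -> exists t, fin = ord ++ t.
Proof.
elim=> [o | o v q' new fin' _ _ [t ->]]; first by exists [::]; rewrite cats0.
by exists (new ++ t); rewrite catA.
Qed.

Lemma bfs_ordering_parents s : connected_graph e -> bfs_ordering e s ->
  exists r, [/\ head r s = r, forall x, x \in s, uniq s,
                parents_precede e s & parents_monotone e s].
Proof.
move=> e_conn [r run]; exists r.
have [P] := bfs_run_invariant run (bfs_invariant_init e r).
rewrite cats0 => <- {P} [s_uniq s_out_closed s_precede s_monotone _].
have [t s_def] := bfs_run_extends run.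
have s_total x : x \in s.
  have s_closed : closed e s.
    by move=> y z eyz; apply/idP/idP => /s_out_closed; apply; rewrite // e_sym.
  by rewrite -(closed_connect s_closed (e_conn r x)) s_def mem_head.
by split; rewrite // s_def.
Qed.

End BfsOrderings.

Section LeafCount.
Variables (T : finType) (e : rel T) (s : seq T) (r : T).
Hypothesis s_head : head r s = r.
Hypothesis s_total : forall x, x \in s.
Hypothesis s_uniq : uniq s.
Hypothesis s_precede : parents_precede e s.
Hypothesis s_monotone : parents_monotone e s.

Local Notation pos x := (index x s).

Lemma head_root v : head v s = r.
Proof. by move: s_head (s_total r); case: s. Qed.

Lemma neq_root x : (x != r) = (0 < pos x).
Proof.
move: s_head (s_total x); case: s => [|y t] //= -> _.
by rewrite eq_sym; case: (r == x).
Qed.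

(* [ftree_parent] made total by fixing the root, so that ancestors are
   the [fconnect] predecessors. *)
Definition tree_parent x := if x == r then r else ftree_parent e s x.

Lemma tree_parentE x : 0 < pos x -> tree_parent x = ftree_parent e s x.
Proof. by rewrite -neq_root /tree_parent => /negbTE->. Qed.

Lemma index_tree_parent x : 0 < pos x -> pos (tree_parent x) = find (e x) s.
Proof.
move=> x_nonroot; rewrite tree_parentE // index_uniq //.
by rewrite (ltn_trans (s_precede (s_total x) x_nonroot)) ?index_mem.
Qed.

Lemma tree_parent_lt x : 0 < pos x -> pos (tree_parent x) < pos x.
Proof. by move=> x_nonroot; rewrite index_tree_parent // s_precede. Qed.

Lemma tree_parent_le x : pos (tree_parent x) <= pos x.
Proof.
have [x_root | /tree_parent_lt/ltnW //] := posnP (pos x).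
have -> : x = r by apply/eqP; rewrite -[x == r]negbK neq_root x_root.
by rewrite /tree_parent eqxx.
Qed.

Lemma iter_tree_parent_le n x : pos (iter n tree_parent x) <= pos x.
Proof. by elim: n => //= n IH; apply: leq_trans (tree_parent_le _) IH. Qed.

Definition deepest_descendant u :=
  [arg max_(y > u | fconnect tree_parent y u) pos y].

Lemma deepest_descendantP u : 0 < pos u ->
  fconnect tree_parent (deepest_descendant u) u /\
  deepest_descendant u \in ftree_leaves e s.
Proof.
move=> u_nonroot; rewrite /deepest_descendant.
case: arg_maxnP => [|L L_desc L_max]; first exact: connect0.
split=> //; rewrite inE s_total head_root neq_root /=.
rewrite (leq_trans u_nonroot (L_max u (connect0 _ _))) /=.
apply/existsP => -[w /and3P[_ /[!head_root] /[!neq_root] w_nonroot /eqP w_child]].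
have w_desc : fconnect tree_parent w u.
  by apply: connect_trans L_desc; rewrite -w_child -tree_parentE ?fconnect1.
have := tree_parent_lt w_nonroot.
rewrite tree_parentE // w_child => /leq_trans/(_ (L_max w w_desc)).
by rewrite ltnn.
Qed.

(* By monotonicity the parent of [u] is no later than that of [b], which
   is no later than its neighbour [a]. *)
Lemma tree_parent_window a b u :
  e b a -> pos a < pos u <= pos b -> pos (tree_parent u) <= pos a.
Proof.
move=> eba /andP[au ub]; rewrite index_tree_parent; last by lia.
apply: leq_trans (s_monotone (s_total u) (s_total b) _ ub) _; first by lia.
by rewrite leqNgt; apply/negP => /(before_find r); rewrite nth_index ?eba.
Qed.

Lemma window_ancestor_unique a b L u1 u2 : e b a ->
  pos a < pos u1 <= pos b -> pos a < pos u2 <= pos b ->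
  fconnect tree_parent L u1 -> fconnect tree_parent L u2 -> u1 = u2.
Proof.
move=> eba.
wlog le12 : u1 u2 / findex tree_parent L u1 <= findex tree_parent L u2.
  move=> wlog w1 w2 c1 c2.
  by case: (leqP (findex tree_parent L u1) (findex tree_parent L u2))
    => [|/ltnW] le; [|symmetry]; apply: wlog.
move=> w1 w2 c1 c2; have := iter_findex c2; have := iter_findex c1.
move: le12; set n1 := findex _ L u1; set n2 := findex _ L u2.
rewrite leq_eqVlt => /orP[/eqP-> <- // | lt12] u1_def u2_def.
have := iter_tree_parent_le (n2 - n1.+1) (tree_parent u1).
rewrite -iterSr subnSK // -u1_def -iterD subnK ?(ltnW lt12) // u2_def u1_def.
by have := tree_parent_window eba w1; lia.
Qed.

Lemma index_sub_le_leaves a b : e b a -> pos b - pos a <= #|ftree_leaves e s|.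
Proof.
move=> eba; have b_lt : pos b < size s by rewrite index_mem.
pose u (m : 'I_(pos b - pos a)) := nth r s (pos a + m.+1).
have m_lt (m : 'I_(pos b - pos a)) : pos a + m < pos b by rewrite -ltn_subRL.
have pos_u m : pos (u m) = pos a + m.+1.
  by rewrite index_uniq // addnS (leq_ltn_trans (m_lt m)).
have window m : pos a < pos (u m) <= pos b by rewrite pos_u addnS ltnS leq_addr m_lt.
have u_nonroot m : 0 < pos (u m) by rewrite pos_u addnS.
have leaf_inj : injective (fun m => deepest_descendant (u m)).
  move=> m1 m2 /= eq12; apply: ord_inj.
  have [c1 _] := deepest_descendantP (u_nonroot m1).
  have [c2 _] := deepest_descendantP (u_nonroot m2).
  rewrite eq12 in c1.
  have := window_ancestor_unique eba (window m1) (window m2) c1 c2.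
  by move/(congr1 (index^~ s)); rewrite !pos_u => /addnI/succn_inj.
rewrite -[X in X <= _]card_ord -(card_imset _ leaf_inj).
apply/subset_leq_card/subsetP => _ /imsetP[m _ ->].
by have [_] := deepest_descendantP (u_nonroot m).
Qed.

Lemma bandwidth_le_leaves : symmetric e -> bandwidth e s <= #|ftree_leaves e s|.
Proof.
move=> e_sym; apply/bigmax_leqP => -[x y] /= exy.
by rewrite geq_max !index_sub_le_leaves // e_sym.
Qed.

End LeafCount.

Theorem theorem3p3 (T : finType) (e : rel T) (s : seq T) (k : nat) :
  simple_graph e -> connected_graph e ->
  bfs_ordering e s ->
  #|ftree_leaves e s| <= k ->
  bandwidth e s <= k.
Proof.
move=> [e_sym _] e_conn s_bfs leaves_k.
have [r [s_head s_total s_uniq s_precede s_monotone]] :=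
  bfs_ordering_parents e_sym e_conn s_bfs.
apply: leq_trans leaves_k.
exact: bandwidth_le_leaves s_head s_total s_uniq s_precede s_monotone e_sym.
Qed.
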